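(* Let $X$, $Y$ and $(Z,d)$ be metric spaces, $1\le\alpha<\omega_1$, and let $f\colon X\times Y\to Z$ satisfy: (1) the family $\{f^x:x\in X\}$ of $x$-sections is equi-$\alpha$-GLP (as functions $Y\to Z$); (2) for every $y\in Y$ the $y$-section $f_y\colon X\to Z$ is of Borel class $\alpha$. Then $f\colon X\times Y\to Z$ is of Borel class $\alpha$.
   Context: For $x\in X$, $y\in Y$: $f^x\colon Y\to Z$, $f^x(y)=f(x,y)$ and $f_y\colon X\to Z$, $f_y(x)=f(x,y)$. In a metric space, sets of additive class $0$ are the open sets, of multiplicative class $0$ the closed sets; for $\alpha\ge1$, sets of additive class $\alpha$ are countable unions of sets of multiplicative classes $<\alpha$, and sets of multiplicative class $\alpha$ are complements of sets of additive class $\alpha$ (so additive class 1 = $F_\sigma$). A function between metric spaces is of Borel class $\alpha$ if the preimage of every open set is of additive class $\alpha$. A family of subsets of $Y$ is discrete if each point has a neighborhood meeting at most one member; $\sigma$-discrete if it is a countable union of discrete families. A family $\mathscr F\subseteq Z^Y$ is equi-$\alpha$-GLP if for every $\varepsilon>0$ there is a $\sigma$-discrete family $\mathcal A_\varepsilon$ of subsets of $Y$ of additive class $\alpha$ such that $Y=\bigcup\mathcal A_\varepsilon$ and $\operatorname{diam}g(A)\le\varepsilon$ for all $A\in\mathcal A_\varepsilon$ and all $g\in\mathscr F$. *)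

From HB Require Import structures.
From mathcomp Require Import all_boot all_order all_algebra.
From mathcomp Require Import all_classical all_reals all_analysis.
Set Implicit Arguments.
Unset Strict Implicit.
Unset Printing Implicit Defensive.
Import Order.TTheory GRing.Theory Num.Theory.
Local Open Scope classical_set_scope.
Local Open Scope ring_scope.

(** Countable ordinals as Brouwer trees: zero, successor, supremum of a
    sequence.  Every tree denotes a countable ordinal and every countable
    ordinal (every ordinal < omega_1) is denoted by some tree. *)
Inductive cord : Type :=
| cord0 : cord
| cordS : cord -> cord
| cordL : (nat -> cord) -> cord.

(** The ordinal order on the denotations:
    [cord_le a b] = (|a| <= |b|), [cord_lt a b] = (|a| < |b|). *)
Inductive cord_le : cord -> cord -> Prop :=
| cord_le0 b : cord_le cord0 b
| cord_leS a b : cord_lt a b -> cord_le (cordS a) b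
| cord_leL f b : (forall n, cord_le (f n) b) -> cord_le (cordL f) b
with cord_lt : cord -> cord -> Prop :=
| cord_ltS a b : cord_le a b -> cord_lt a (cordS b)
| cord_ltL a f n : cord_lt a (f n) -> cord_lt a (cordL f).

Inductive additive_class {T : topologicalType} : cord -> set T -> Prop :=
| additive_class_open (a : cord) (A : set T) :
    cord_le a cord0 -> open A -> additive_class a A
| additive_class_union (a : cord) (A : set T) (B : nat -> set T)
    (b : nat -> cord) :
    cord_lt cord0 a ->
    (forall n, cord_lt (b n) a) ->
    (forall n, additive_class (b n) (~` B n)) ->
    A = \bigcup_n B n ->
    additive_class a A.

Definition multiplicative_class {T : topologicalType} (a : cord) (A : set T) :=
  additive_class a (~` A).

Definition borel_class {S T : topologicalType} (a : cord) (f : S -> T) :=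
  forall U : set T, open U -> additive_class a (f @^-1` U).

Definition discrete_family {T : topologicalType} (F : set (set T)) :=
  forall y : T, exists2 N : set T, nbhs y N &
    forall A B : set T, F A -> F B ->
      N `&` A !=set0 -> N `&` B !=set0 -> A = B.

Definition sigma_discrete_family {T : topologicalType} (F : set (set T)) :=
  exists2 G : nat -> set (set T), (forall n, discrete_family (G n)) &
    F = \bigcup_n G n.

Definition equi_GLP {R : realType} {Y : topologicalType} {Z : metricType R}
    (a : cord) (F : set (Y -> Z)) :=
  forall eps : R, 0 < eps ->
    exists A : set (set Y),
      [/\ sigma_discrete_family A,
          (forall U, A U -> additive_class a U),
          \bigcup_(U in A) U = setT &
          forall U g, A U -> F g ->
            forall u v, U u -> U v -> mdist (g u) (g v) <= eps].

From HB Require Import structures.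
From mathcomp Require Import all_boot all_order all_algebra.
From mathcomp Require Import all_classical all_reals all_analysis.
From mathcomp Require Import lra borel_hierarchy.
From Stdlib Require Cantor.
Set Implicit Arguments.
Unset Strict Implicit.
Unset Printing Implicit Defensive.
Import Order.TTheory GRing.Theory Num.Theory.
Local Open Scope classical_set_scope.
Local Open Scope ring_scope.

(** Fix an open [V] in [Z] and, for each [k], a sigma-discrete cover [A_k] of
    [Y] by sets of additive class alpha on which every [x]-section oscillates
    by at most [e_k = 1/(k+1)].  With a point [y_U] chosen in each piece [U],
    [f (x, y)] lies in [V] iff, for some [k] and the piece [U] containing [y],
    the value [f (x, y_U)] lies at depth more than [e_k] in [V].  So [f^-1 V]
    is a countable union of unions of discrete families of slabs
    [f_{y_U}^-1 (deep V) * U], each of additive class alpha by the two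
    hypotheses.  It remains that additive class alpha is stable under unions
    of families subordinate to a discrete family of open sets (in a metric
    space a discrete family can be fattened to one); this is proved together
    with its multiplicative counterpart by transfinite induction, using that
    open sets are F_sigma and that every countable ordinal is the supremum of
    a sequence of smaller ones. *)

Scheme cord_le_mut := Induction for cord_le Sort Prop
with cord_lt_mut := Induction for cord_lt Sort Prop.
Combined Scheme cord_le_lt_ind from cord_le_mut, cord_lt_mut.

Lemma cord_le_sub_lt a b b' : cord_le a b ->
  (forall c, cord_lt c b -> cord_lt c b') -> cord_le a b'.
Proof. by elim=> {a b} [b|a b Hab|f b _ IH] Hb; constructor; auto. Qed.

Lemma cord_ltW_leS :
  (forall a b, cord_le a b -> cord_le a (cordS b)) /\
  (forall a b, cord_lt a b -> cord_le a b).
Proof.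
apply: (@cord_le_lt_ind (fun a b _ => cord_le a (cordS b))
                        (fun a b _ => cord_le a b)).
- by constructor.
- by do 2 constructor.
- by move=> f b _ IH; constructor.
- by [].
- by move=> a f n _ IH; apply: (cord_le_sub_lt IH) => c; apply: cord_ltL.
Qed.

Lemma cord_ltW a b : cord_lt a b -> cord_le a b.
Proof. exact: cord_ltW_leS.2. Qed.

Lemma cord_le_refl a : cord_le a a.
Proof.
elim: a => [|a IH|f IH]; do ?constructor => //.
by move=> n; apply: (cord_le_sub_lt (IH n)) => c; apply: cord_ltL.
Qed.

Lemma cord_lt_above a b c : cord_lt b c ->
  (forall d, cord_le b d -> cord_le a d) -> cord_lt a c.
Proof.
elim=> {b c} [b c Hbc|b f n _ IH] Ha; first by constructor; apply: Ha.
exact: cord_ltL (IH Ha).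
Qed.

Lemma cord_le_lt_trans_mut :
  (forall a b, cord_le a b -> forall c, cord_le b c -> cord_le a c) /\
  (forall a b, cord_lt a b -> forall c, cord_le b c -> cord_lt a c).
Proof.
apply: (@cord_le_lt_ind (fun a b _ => forall c, cord_le b c -> cord_le a c)
                        (fun a b _ => forall c, cord_le b c -> cord_lt a c)).
- by constructor.
- by move=> a b _ IH c Hc; constructor; apply: IH.
- by move=> f b _ IH c Hc; constructor => n; apply: IH.
- by move=> a b _ IH c Hc; inversion Hc; subst; apply: cord_lt_above IH.
- by move=> a f n _ IH c Hc; inversion Hc; subst; apply: IH.
Qed.

Lemma cord_lt_le_trans a b c : cord_lt a b -> cord_le b c -> cord_lt a c.
Proof. by move=> Hab; apply: (cord_le_lt_trans_mut.2 _ _ Hab). Qed.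

Lemma cord_nlt0 a : ~ cord_lt a cord0.
Proof. by move=> H; inversion H. Qed.

Lemma cord_lt_wf : well_founded cord_lt.
Proof.
elim=> [|a IH|f IH]; constructor => b Hb; inversion Hb; subst.
- by constructor => c Hc; apply: (Acc_inv IH); apply: cord_lt_le_trans Hc _.
- exact: Acc_inv (IH n) _ _.
Qed.

Lemma cord_lt_ge_of_le_gt a : (forall b, cord_le a b \/ cord_lt b a) ->
  forall b, cord_lt a b \/ cord_le b a.
Proof.
move=> Ha; elim=> [|b _|g IH].
- by right; constructor.
- by case: (Ha b) => H; [left|right]; constructor.
- have [[n Hn]|Hn] := pselect (exists n, cord_lt a (g n)).
    by left; apply: cord_ltL Hn.
  right; constructor => n; case: (IH n) => // Hn'.
  by exfalso; apply: Hn; exists n.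
Qed.

Lemma cord_le_total a b : cord_le a b \/ cord_lt b a.
Proof.
elim: a b => [|a IH|f IH] b; first by left; constructor.
  by case: (cord_lt_ge_of_le_gt IH b) => H; [left|right]; constructor.
have [Hf|/existsNP[n Hn]] := pselect (forall n, cord_le (f n) b).
  by left; constructor.
by right; case: (IH n b) => // H; apply: cord_ltL H.
Qed.

Lemma cord_le0_or_gt0 a : cord_le a cord0 \/ cord_lt cord0 a.
Proof.
case: (cord_lt_ge_of_le_gt (fun b => cord_le_total cord0 b) a) => H.
- by right.
- by left.
Qed.

Lemma cord_lt_max a b c : cord_lt a c -> cord_lt b c ->
  exists2 d, cord_le a d /\ cord_le b d & cord_lt d c.
Proof.
move=> Hac Hbc; case: (cord_le_total a b) => H.
- by exists b => //; split => //; apply: cord_le_refl.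
- by exists a => //; split; [apply: cord_le_refl|apply: cord_ltW].
Qed.

Lemma cord_lt_cofinal_seq c : exists s : nat -> cord,
  forall b, cord_lt b c -> exists k, cord_le b (s k) /\ cord_lt (s k) c.
Proof.
elim: c => [|c _|f IH].
- by exists (fun=> cord0) => b /cord_nlt0.
- exists (fun=> c) => b Hb; exists 0%N; inversion Hb; subst.
  by split => //; constructor; apply: cord_le_refl.
- have [s Hs] := choice IH.
  exists (fun m => s (Cantor.of_nat m).1 (Cantor.of_nat m).2) => b Hb.
  inversion Hb; subst; have [k [Hbk Hk]] := Hs n b H1.
  exists (Cantor.to_nat (n, k)); rewrite Cantor.cancel_of_to /=.
  by split => //; apply: cord_ltL Hk.
Qed.

Lemma cord_cofinal_seq c : cord_lt cord0 c -> exists s : nat -> cord,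
  (forall k, cord_lt (s k) c) /\
  forall b, cord_lt b c -> exists k, cord_le b (s k).
Proof.
move=> c0; have [s Hs] := cord_lt_cofinal_seq c.
exists (fun k => if pselect (cord_lt (s k) c) then s k else cord0); split.
- by move=> k; case: pselect.
- by move=> b /Hs[k [bk sk]]; exists k; case: pselect.
Qed.

Lemma bigcup_nat2 (T : Type) (F : nat -> nat -> set T) :
  \bigcup_n \bigcup_k F n k =
  \bigcup_m F (Cantor.of_nat m).1 (Cantor.of_nat m).2.
Proof.
apply/seteqP; split => x.
- case=> n _ [k _ Fx]; exists (Cantor.to_nat (n, k)) => //.
  by rewrite Cantor.cancel_of_to.
- case=> m _ Fx; exists (Cantor.of_nat m).1 => //.
  by exists (Cantor.of_nat m).2.
Qed.

Lemma preimage_additive_class (S T : topologicalType) (g : S -> T) c A :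
  continuous g -> additive_class c A -> additive_class c (g @^-1` A).
Proof.
move=> gC; elim=> {c A} [c A c0 Ao|c A B b c0 bc _ IH ->].
- by apply: additive_class_open c0 _; apply: open_comp _ Ao => x _; apply: gC.
- by apply: (additive_class_union (B := fun n => g @^-1` B n) (b := b)).
Qed.

Section AdditiveClasses.
Variable T : topologicalType.
Hypothesis open_Fsigma : forall W : set T, open W -> Fsigma W.
Local Notation add := (@additive_class T).
Local Notation mul := (@multiplicative_class T).

Lemma additive_class_le0_open c A : cord_le c cord0 -> add c A -> open A.
Proof.
move=> c0 HA; case: HA c0 => [a A' _ //|a A' B b a0 _ _ _ a0'].
by case: (cord_nlt0 (cord_lt_le_trans a0 a0')).
Qed.

Lemma bigcup_multiplicative_class c (B : nat -> set T) : cord_lt cord0 c ->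
  (forall n, exists b, cord_lt b c /\ mul b (B n)) -> add c (\bigcup_n B n).
Proof.
move=> c0 HB; have [b Hb] := choice HB.
by apply: (additive_class_union (b := b)) => // n; case: (Hb n).
Qed.

Lemma open_additive_class c A : open A -> add c A.
Proof.
move=> Ao; case: (cord_le0_or_gt0 c) => c0; first exact: additive_class_open.
have [F Fcl ->] := open_Fsigma Ao; apply: bigcup_multiplicative_class => // n.
exists cord0; split => //.
exact: additive_class_open (cord_le0 _) (closed_openC (Fcl n)).
Qed.

Lemma closed_multiplicative_class c F : closed F -> mul c F.
Proof. by move=> /closed_openC; apply: open_additive_class. Qed.

Lemma multiplicative_class0 c : mul c set0.
Proof. exact: closed_multiplicative_class closed0. Qed.

Lemma additive_class_bigcupE c A : cord_lt cord0 c -> add c A ->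
  exists B : nat -> set T,
    A = \bigcup_n B n /\ forall n, exists b, cord_lt b c /\ mul b (B n).
Proof.
move=> c0 HA.
case: HA c0 => [a A' _ /open_Fsigma[F Fcl ->] a0|a A' B b _ bc Bb -> _].
- exists F; split => // n; exists cord0; split => //.
  exact: closed_multiplicative_class.
- by exists B; split => // n; exists (b n); split; [apply: bc|apply: Bb].
Qed.

Lemma additive_class_le b c A : cord_le b c -> add b A -> add c A.
Proof.
move=> bc HA; elim: HA c bc => {b A} [b A _ Ao|b A B d b0 db Bd _ ->] c bc.
  exact: open_additive_class.
apply: bigcup_multiplicative_class; first exact: cord_lt_le_trans b0 bc.
by move=> n; exists (d n); split; [apply: cord_lt_le_trans (db n) bc|apply: Bd].
Qed.

Lemma closed_additive_class c F : cord_lt cord0 c -> closed F -> add c F.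
Proof.
move=> c0 Fcl; rewrite -(@bigcup_const _ nat setT F); last by exists 0%N.
apply: bigcup_multiplicative_class => // n; exists cord0; split => //.
exact: closed_multiplicative_class.
Qed.

Lemma bigcup_additive_class c (A : nat -> set T) : cord_lt cord0 c ->
  (forall n, add c (A n)) -> add c (\bigcup_n A n).
Proof.
move=> c0 HA; have [B HB] := choice (fun n => additive_class_bigcupE c0 (HA n)).
have -> : \bigcup_n A n = \bigcup_n \bigcup_k B n k.
  by apply: eq_bigcupr => n _; case: (HB n).
rewrite bigcup_nat2; apply: bigcup_multiplicative_class => // m.
by case: (HB (Cantor.of_nat m).1).
Qed.

Lemma additive_classU c A B : add c A -> add c B -> add c (A `|` B).
Proof.
case: (cord_le0_or_gt0 c) => [c0 HA HB|c0 HA HB].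
  apply: (additive_class_open c0).
  by apply: openU; apply: (additive_class_le0_open c0).
rewrite -bigcup2E; apply: bigcup_additive_class => // -[|[|n]] //=.
exact: open_additive_class open0.
Qed.

Lemma additive_classI c A B : add c A -> add c B -> add c (A `&` B).
Proof.
case: (cord_le0_or_gt0 c) => [c0 HA HB|c0 HA HB].
  apply: (additive_class_open c0).
  by apply: openI; apply: (additive_class_le0_open c0).
have [A' [-> HA']] := additive_class_bigcupE c0 HA.
have [B' [-> HB']] := additive_class_bigcupE c0 HB.
rewrite setI_bigcupl; under eq_bigcupr do rewrite setI_bigcupr.
rewrite bigcup_nat2; apply: bigcup_multiplicative_class => // m.
have [a [ac Aa]] := HA' (Cantor.of_nat m).1.
have [b [bc Bb]] := HB' (Cantor.of_nat m).2.
have [d [ad bd] dc] := cord_lt_max ac bc; exists d; split => //.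
rewrite /multiplicative_class setCI.
by apply: additive_classU; [apply: additive_class_le ad Aa|
                           apply: additive_class_le bd Bb].
Qed.

Section DiscreteUnions.
Variables (I : Type) (G : I -> set T).
Hypothesis G_open : forall i, open (G i).
Hypothesis G_discrete : forall z : T, exists2 N : set T, nbhs z N &
  forall i j, N `&` G i !=set0 -> N `&` G j !=set0 -> i = j.

Lemma discrete_bigcup_closed (E : I -> set T) : (forall i, E i `<=` G i) ->
  (forall i, closed (E i)) -> closed (\bigcup_i E i).
Proof.
move=> EG Ecl p Ep; apply: contrapT => NEp.
have [N Np NG] := G_discrete p; have [q [[i _ Eiq] Nq]] := Ep N Np.
have NEip : nbhs p (~` E i).
  apply: open_nbhs_nbhs; split; first exact: closed_openC.
  by move=> Eip; apply: NEp; exists i.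
have [q' [[j _ Ejq'] [Nq' NEiq']]] := Ep _ (filterI Np NEip).
have ij : i = j.
  by apply: NG; [exists q|exists q']; split => //; apply: EG.
by rewrite -ij in Ejq'.
Qed.

Definition discrete_unions_additive c := forall E : I -> set T,
  (forall i, E i `<=` G i) -> (forall i, add c (E i)) -> add c (\bigcup_i E i).

Definition discrete_unions_multiplicative c := forall E : I -> set T,
  (forall i, E i `<=` G i) -> (forall i, mul c (E i)) -> mul c (\bigcup_i E i).

Lemma discrete_unions_le0 c : cord_le c cord0 ->
  discrete_unions_additive c /\ discrete_unions_multiplicative c.
Proof.
move=> c0; split => E EG HE; apply: (additive_class_open c0).
- by apply: bigcup_open => i _; apply: (additive_class_le0_open c0).
- apply: closed_openC; apply: discrete_bigcup_closed => // i.
  by have := open_closedC (additive_class_le0_open c0 (HE i)); rewrite setCK.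
Qed.

Lemma discrete_unions_additive_step c : cord_lt cord0 c ->
  (forall d, cord_lt d c -> discrete_unions_multiplicative d) ->
  discrete_unions_additive c.
Proof.
move=> c0 IH E EG HE.
have [B HB] := choice (fun i => additive_class_bigcupE c0 (HE i)).
have [s [sc scof]] := cord_cofinal_seq c0.
have HK : forall p : I * nat, exists k, mul (s k) (B p.1 p.2).
  move=> [i n]; have [b [bc Bb]] := (HB i).2 n; have [k bk] := scof b bc.
  by exists k; apply: additive_class_le bk Bb.
have [K BK] := choice HK.
(* Sorting the pieces [B i n] by the index [K (i, n)] of a class of the
   cofinal sequence above theirs leaves only countably many classes. *)
pose C n k i := if K (i, n) == k then B i n else set0.
have -> : \bigcup_i E i = \bigcup_n \bigcup_k \bigcup_i C n k i.
  apply/seteqP; split => x.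
  - case=> i _; rewrite (HB i).1 => -[n _ Bx].
    by exists n => //; exists (K (i, n)) => //; exists i; rewrite /C ?eqxx.
  - case=> n _ [k _ [i _]]; rewrite /C; case: eqP => // _ Bx.
    by exists i => //; rewrite (HB i).1; exists n.
rewrite bigcup_nat2; apply: bigcup_multiplicative_class => // m.
set n := (Cantor.of_nat m).1; set k := (Cantor.of_nat m).2.
exists (s k); split => //.
apply: IH => // [i x|i]; rewrite /C; case: eqP => // Kik.
- by move=> Bx; apply: EG; rewrite (HB i).1; exists n.
- by rewrite -Kik; apply: (BK (i, n)).
- exact: multiplicative_class0.
Qed.

Lemma discrete_unions_multiplicative_step c : cord_lt cord0 c ->
  discrete_unions_additive c -> discrete_unions_multiplicative c.
Proof.
move=> c0 HD E EG HE.
have HF : forall i, exists F : nat -> set T,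
    (forall n, closed (F n)) /\ G i = \bigcup_n F n.
  by move=> i; have [F Fcl GF] := open_Fsigma (G_open i); exists F.
have [F HF'] := choice HF.
rewrite /multiplicative_class.
have -> : ~` (\bigcup_i E i) =
    ~` (\bigcup_i G i) `|` \bigcup_m \bigcup_i (F i m `&` ~` E i).
  apply/seteqP; split => x.
  - move=> NEx; have [[i _ Gix]|NGx] := pselect ((\bigcup_i G i) x).
      2: by left.
    right; move: Gix; rewrite (HF' i).2 => -[m _ Fx].
    by exists m => //; exists i => //; split => // Eix; apply: NEx; exists i.
  - case=> [NGx [i _ Eix]|[m _ [i _ [Fx NEix]]] [j _ Ejx]].
      by apply: NGx; exists i => //; apply: EG.
    have Gix : G i x by rewrite (HF' i).2; exists m.
    have [N /nbhs_singleton Nx NG] := G_discrete x.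
    have ij : i = j by apply: NG; exists x; split => //; apply: EG.
    by rewrite -ij in Ejx.
apply: additive_classU.
- by apply: closed_additive_class => //; apply: open_closedC; apply: bigcup_open.
- apply: bigcup_additive_class => // m; apply: HD => [i x [Fx _]|i].
    by rewrite (HF' i).2; exists m.
  apply: additive_classI; last exact: HE.
  by apply: closed_additive_class; case: (HF' i).
Qed.

Lemma discrete_unions c :
  discrete_unions_additive c /\ discrete_unions_multiplicative c.
Proof.
elim/(well_founded_ind cord_lt_wf): c => c IH.
case: (cord_le0_or_gt0 c) => c0; first exact: discrete_unions_le0.
have HD := discrete_unions_additive_step c0 (fun d dc => (IH d dc).2).
by split => //; apply: discrete_unions_multiplicative_step.
Qed.

End DiscreteUnions.
End AdditiveClasses.

Lemma pseudoMetric_open_Fsigma (R : realType) (M : pseudoMetricType R)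
    (W : set M) : open W -> Fsigma W.
Proof.
move=> Wo; exists (fun n => closure [set p | ball p n.+1%:R^-1 `<=` W]).
  by move=> n; apply: closed_closure.
apply/seteqP; split => p.
- move=> Wp; have /nbhs_ballP[e /= e0 peW] : nbhs p W.
    by apply: open_nbhs_nbhs; split.
  have [n _ /(_ n (leqnn n)) ne] := near_infty_natSinv_lt (PosNum e0).
  exists n => //; apply: subset_closure.
  by apply: subset_trans peW; apply/le_ball/ltW.
- case=> n _; set r : R := n.+1%:R^-1; have r0 : 0 < r by rewrite invr_gt0.
  move=> /(_ _ (nbhsx_ballx p (r / 2) _)) [|q [qW /ball_sym pq]].
    by rewrite divr_gt0.
  by apply: qW; apply: le_ball pq; lra.
Qed.

Section MetricSpaces.
Variables (R : realType) (M : metricType R).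

Lemma discrete_family_radius (F : set (set M)) : discrete_family F ->
  exists rho : M -> R, forall u, 0 < rho u /\
    forall A B, F A -> F B -> (exists2 a, A a & mdist u a < rho u) ->
      (exists2 b, B b & mdist u b < rho u) -> A = B.
Proof.
move=> HF; have Hrho : forall u, exists r, 0 < r /\
    forall A B, F A -> F B -> (exists2 a, A a & mdist u a < r) ->
      (exists2 b, B b & mdist u b < r) -> A = B.
  move=> u; have [N /nbhs_ballP[e /= e0 ueN] NF] := HF u.
  exists e; split => // A B FA FB [a Aa ua] [b Bb ub].
  apply: NF => //; [exists a|exists b]; split => //.
  - by apply: ueN; rewrite ballEmdist.
  - by apply: ueN; rewrite ballEmdist.
by have [rho] := choice Hrho; exists rho.
Qed.

Lemma discrete_family_open_expansion (F : set (set M)) : discrete_family F ->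
  exists G : set M -> set M, [/\ forall U, open (G U),
    forall U, F U -> U `<=` G U &
    forall z : M, exists2 N : set M, nbhs z N &
      forall U V, N `&` G U !=set0 -> N `&` G V !=set0 -> U = V].
Proof.
move=> HF; have [rho Hrho] := discrete_family_radius HF.
exists (fun U => [set y | F U /\ exists2 u, U u & mdist u y < rho u / 4]); split.
- move=> U; rewrite openE => y [FU [u Uu uy]]; apply/nbhs_ballP.
  exists (rho u / 4 - mdist u y); first by rewrite /= subr_gt0.
  move=> y'; rewrite ballEmdist /= => yy'; split => //; exists u => //.
  by have := metric_triangle u y y'; lra.
- move=> U FU u Uu; split => //; exists u => //; rewrite mdistxx.
  by have [? _] := Hrho u; lra.
move=> z; have [N /nbhs_ballP[s /= s0 zsN] NF] := HF z.
exists (ball z (s / 4)); first by apply: nbhsx_ballx; rewrite divr_gt0.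
move=> U V [y1 [zy1 [FU [u Uu uy1]]]] [y2 [zy2 [FV [v Vv vy2]]]].
rewrite ballEmdist /= in zy1 zy2.
wlog rvu : U V u v y1 y2 FU FV Uu Vv uy1 vy2 zy1 zy2 / rho v <= rho u.
  move=> H; case: (leP (rho v) (rho u)) => [|/ltW] ?.
    exact: (H U V u v y1 y2).
  by apply/esym; apply: (H V U v u y2 y1).
(* Either both centres lie in [N], or [u] and [v] lie in a ball around [u]
   of radius [rho u]. *)
have [ru0 Fu] := Hrho u.
have [rus|sru] := leP (rho u) (3 * s).
- apply: NF => //; [exists u|exists v]; split => //;
    apply: zsN; rewrite ballEmdist /=.
  + by have := metric_triangle z y1 u; rewrite (metric_sym y1 u); lra.
  + by have := metric_triangle z y2 v; rewrite (metric_sym y2 v); lra.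
- apply: Fu => //; [exists u => //; rewrite mdistxx //|exists v => //].
  have := metric_triangle u y1 v; have := metric_triangle y1 z v.
  have := metric_triangle z y2 v; rewrite (metric_sym y1 z) (metric_sym y2 v).
  lra.
Qed.

(* Unlike [[set w | ball w e `<=` V]], this set is open. *)
Definition deep_points (V : set M) (e : R) : set M :=
  [set w | exists2 r, e < r & ball w r `<=` V].

Lemma open_deep_points V e : open (deep_points V e).
Proof.
rewrite openE => w [r er wrV]; apply/nbhs_ballP; exists (r - e) => /=.
  by rewrite subr_gt0.
move=> w'; rewrite ballEmdist /= => ww'; exists (r - mdist w w'); first lra.
move=> z; rewrite ballEmdist /= => w'z; apply: wrV; rewrite ballEmdist /=.
by have := metric_triangle w w' z; lra.
Qed.

Lemma deep_points_ball V e r z w : ball z r `<=` V -> mdist z w <= e ->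
  2 * e < r -> deep_points V e w.
Proof.
move=> zrV zw er; exists (r - e); first lra.
move=> y; rewrite ballEmdist /= => wy; apply: zrV; rewrite ballEmdist /=.
by have := metric_triangle z w y; lra.
Qed.

Lemma deep_points_mdist V e w w' : deep_points V e w -> mdist w w' <= e -> V w'.
Proof. by move=> [r er wrV] ww'; apply: wrV; rewrite ballEmdist /=; lra. Qed.

End MetricSpaces.

Lemma equi_GLP_seq (R : realType) (Y : topologicalType) (Z : metricType R)
    (a : cord) (F : set (Y -> Z)) : equi_GLP a F ->
  exists A : nat -> nat -> set (set Y), [/\ forall k n, discrete_family (A k n),
    forall k n U, A k n U -> additive_class a U,
    forall k y, exists n, exists2 U, A k n U & U y &
    forall k n U g u v, A k n U -> F g -> U u -> U v ->
      mdist (g u) (g v) <= k.+1%:R^-1].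
Proof.
move=> HG; have eps0 (k : nat) : 0 < k.+1%:R^-1 :> R by rewrite invr_gt0.
have [B HB] := choice (fun k => HG _ (eps0 k)).
have HA : forall k, exists Ak : nat -> set (set Y),
    (forall n, discrete_family (Ak n)) /\ B k = \bigcup_n Ak n.
  by move=> k; have [[Ak ? ?] _ _ _] := HB k; exists Ak.
have [A {}HA] := choice HA; exists A; split.
- by move=> k n; case: (HA k).
- by move=> k n U AU; have [_ + _ _] := HB k; apply; rewrite (HA k).2; exists n.
- move=> k y; have [_ _ cov _] := HB k.
  have : (\bigcup_(U in B k) U) y by rewrite cov.
  by case=> U; rewrite (HA k).2 => -[n _ AU] Uy; exists n; exists U.
- move=> k n U g u v AU Fg Uu Uv; have [_ _ _ diam] := HB k.
  by apply: (diam U g _ Fg u v Uu Uv); rewrite (HA k).2; exists n.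
Qed.

Lemma xget_nonempty (T : choiceType) (x0 x1 : T) (P : set T) :
  P !=set0 -> xget x0 P = xget x1 P.
Proof.
by move=> [x Px]; rewrite /xget; case: pselect => // -[]; exists x; apply/asboolP.
Qed.

Section Slabs.
Variables (R : realType) (X Y Z : metricType R) (f : X * Y -> Z).

(* [xget p.2 U] is the chosen point [y_U] of [U]: it does not depend on [p]
   once [U] is nonempty (lemma [xget_nonempty]). *)
Definition slab (V : set Z) (e : R) (A : set (set Y)) (U : set Y) :
    set (X * Y) :=
  [set p | A U /\ U p.2 /\ deep_points V e (f (p.1, xget p.2 U))].

Lemma preimage_bigcup_slabs (V : set Z) (A : nat -> nat -> set (set Y)) :
  open V -> (forall k y, exists n, exists2 U, A k n U & U y) ->
  (forall k n U g u v, A k n U -> range (fun x y => f (x, y)) g -> U u -> U v ->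
    mdist (g u) (g v) <= k.+1%:R^-1) ->
  f @^-1` V = \bigcup_k \bigcup_n \bigcup_U slab V k.+1%:R^-1 (A k n) U.
Proof.
move=> Vo Acover Adiam; apply/seteqP; split => -[x y] /=.
- move=> Vf; have /nbhs_ballP[r /= r0 fV] : nbhs (f (x, y)) V.
    by apply: open_nbhs_nbhs; split.
  have r20 : 0 < r / 2 by rewrite divr_gt0.
  have [k _ /(_ k (leqnn k)) kr] := near_infty_natSinv_lt (PosNum r20).
  have {}kr : 2 * k.+1%:R^-1 < r.
    by have : k.+1%:R^-1 < r / 2 := kr; set e := k.+1%:R^-1; lra.
  have [n [U AU Uy]] := Acover k y.
  exists k => //; exists n => //; exists U => //; split => //; split => //.
  apply: (deep_points_ball fV _ kr).
  by apply: (Adiam k n U (fun y => f (x, y))) => //; apply: xgetI Uy.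
- case=> k _ [n _ [U _ [AU [Uy deep]]]]; apply: (deep_points_mdist deep).
  by apply: (Adiam k n U (fun y => f (x, y))) => //; apply: xgetI Uy.
Qed.

Lemma slab_additive_class (V : set Z) (e : R) (A : set (set Y)) (a : cord) :
  cord_lt cord0 a -> discrete_family A ->
  (forall U, A U -> additive_class a U) ->
  (forall y, borel_class a (fun x => f (x, y))) ->
  additive_class a (\bigcup_U slab V e A U).
Proof.
move=> a0 Adisc Aclass Hsec.
have [G [Go AG Gdisc]] := discrete_family_open_expansion Adisc.
have XY_Fsigma := @pseudoMetric_open_Fsigma R (X * Y)%type.
have GXo : forall U, open (snd @^-1` G U : set (X * Y)).
  by move=> U; apply: open_comp _ (Go U) => p _; apply: cvg_snd.
have GXdisc : forall p : X * Y, exists2 N : set (X * Y), nbhs p N &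
    forall U U', N `&` snd @^-1` G U !=set0 ->
      N `&` snd @^-1` G U' !=set0 -> U = U'.
  move=> [x y]; have [N Ny NG] := Gdisc y.
  exists (snd @^-1` N); first exact: cvg_snd Ny.
  by move=> U U' [p [Np Gp]] [p' [Np' Gp']]; apply: NG; [exists p.2|exists p'.2].
apply: (discrete_unions XY_Fsigma GXo GXdisc a).1 => [U p [AU [Up _]]|].
  exact: AG.
move=> U; have [[AU [y Uy]]|NU] := pselect (A U /\ U !=set0); last first.
  rewrite (_ : slab V e A U = set0); first exact: open_additive_class open0.
  by apply/seteqP; split => p // [AU [Up _]]; apply: NU; split => //; exists p.2.
rewrite (_ : slab V e A U =
    fst @^-1` ((fun x => f (x, xget y U)) @^-1` deep_points V e) `&` snd @^-1` U).
  apply: (additive_classI XY_Fsigma); apply: preimage_additive_class.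
  - by move=> p; apply: cvg_fst.
  - by apply: Hsec; apply: open_deep_points.
  - by move=> p; apply: cvg_snd.
  - exact: Aclass.
apply/seteqP; split => -[x y'] /=.
- by move=> [_ [Uy' deep]]; split => //; rewrite (xget_nonempty y y') //; exists y.
- by move=> [deep Uy']; do 2 split => //; rewrite (xget_nonempty y' y) //; exists y.
Qed.

End Slabs.

Theorem theorem3p19 (R : realType) (X Y Z : metricType R) (a : cord)
    (f : X * Y -> Z) :
  cord_le (cordS cord0) a ->
  equi_GLP a (range (fun x : X => fun y : Y => f (x, y))) ->
  (forall y : Y, borel_class a (fun x : X => f (x, y))) ->
  borel_class a f.
Proof.
move=> a1 /equi_GLP_seq[A [Adisc Aclass Acover Adiam]] Hsec V Vo.
have a0 : cord_lt cord0 a by inversion a1.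
have XY_Fsigma := @pseudoMetric_open_Fsigma R (X * Y)%type.
rewrite (preimage_bigcup_slabs Vo Acover Adiam).
apply: (bigcup_additive_class XY_Fsigma) => // k.
apply: (bigcup_additive_class XY_Fsigma) => // n.
exact: slab_additive_class a0 (Adisc k n) (Aclass k n) Hsec.
Qed.
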